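(* Let a sequence $b_1,b_2,\dots$ be encoded by a causal linear time-invariant code that is $(R,\beta)$-anytime reliable (with $d_o=0$) over the packet erasure channel, and decoded by the erasure decoder, as described in the context. Let $1\le\tau_1'\le\tau_1<\tau_2'\le\tau_2$ be integers (so the intervals $[\tau_1',\tau_1]$ and $[\tau_2',\tau_2]$ are disjoint). Then $$P\big(Y(\tau_1',\tau_1)\cap Y(\tau_2',\tau_2)\big)\le 2^{-\beta\left((\tau_1-\tau_1'+1)+(\tau_2-\tau_2'+1)\right)},$$ where the probability is over the channel erasures only.
   Context: Packets are elements of $\mathbb F_2^{\Lambda}$. A causal linear time-invariant code maps information blocks $b_t\in\mathbb F_2^{a}$ ($t\ge1$) to channel blocks $c_t=G_1b_t+G_2b_{t-1}+\dots+G_tb_1\in\mathbb F_2^{n\Lambda}$, consisting of $n$ packets, with fixed matrices $G_i$ over $\mathbb F_2$. Each transmitted packet is independently erased with probability $p$ and otherwise received correctly. At each time $t$ the decoder, using all unerased packets received up to time $t$, produces estimates $\hat b_{\tau|t}$, $1\le\tau\le t$: $\hat b_{\tau|t}=b_\tau$ if $b_\tau$ is uniquely determined by the received packets (i.e. it takes the same value in every input sequence consistent with them), and otherwise $\hat b_{\tau|t}$ is declared an erasure (counted as $\hat b_{\tau|t}\neq b_\tau$). The code is $(R,\beta)$-anytime reliable (with $d_o=0$) if for every input sequence and all $1\le\tau\le t$, $P(\hat b_{\tau|t}\ne b_\tau)\le 2^{-\beta(t-\tau+1)}$. For $1\le\tau'\le\tau$, $Y(\tau',\tau)$ denotes the event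 that at decoding time $\tau$ the earliest decoding error is at position $\tau'$: $\hat b_{\ell|\tau}=b_\ell$ for all $\ell<\tau'$ and $\hat b_{\tau'|\tau}\ne b_{\tau'}$. *)

From mathcomp Require Import all_boot all_algebra.
From Stdlib Require Import Reals.

Set Implicit Arguments.
Unset Strict Implicit.
Unset Printing Implicit Defensive.

(* Code: a causal LTI code with packets in F_2^Lambda, n packets per
   channel block, information blocks in F_2^a.  G i j : 'M_(Lambda,a) is
   the block of rows of G_i producing packet j (j < n); so
   G_i = (G i 0; ...; G i (n-1)) stacked, an (n*Lambda) x a matrix.
   Times are 1,2,3,...; G 0 is unused.                                  *)
Local Open Scope ring_scope.
Definition code (n Lam a : nat) := nat -> 'I_n -> 'M['F_2]_(Lam, a).

(* Information sequence b_1, b_2, ... (b 0 unused). *)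
Definition inseq (a : nat) := nat -> 'cV['F_2]_a.

Definition chan n Lam a (G : code n Lam a) (b : inseq a) (t : nat) (j : 'I_n)
  : 'cV['F_2]_Lam :=
  \sum_(1 <= s < t.+1) mulmx (G (t - s).+1 j) (b s).

(* Erasure pattern: e t j = true iff packet j of block t is erased. *)
Definition epat (n : nat) := nat -> 'I_n -> bool.

Local Close Scope ring_scope.
(* the input sequence b_1..b_t given by a finite table B (B i = b'_{i+1}),
   extended by 0 outside 1..t *)
Definition seqof a t (B : {ffun 'I_t -> 'cV['F_2]_a}) : inseq a :=
  fun s => if (0 < s)%N then
             (match (insub s.-1 : option 'I_t) with
              | Some i => B i
              | None => GRing.zero
              end)
           else GRing.zero.

Definition consistent n Lam a (G : code n Lam a) (e : epat n) (b : inseq a)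
  t (B : {ffun 'I_t -> 'cV['F_2]_a}) : bool :=
  [forall s : 'I_t, forall j : 'I_n,
     ~~ e s.+1 j ==> (chan G (seqof B) s.+1 j == chan G b s.+1 j)].

(* hat b_{tau|t} = b_tau : b_tau is uniquely determined by the packets
   received up to time t (same value in every consistent input). Inputs
   at times > t do not affect packets up to time t, so it suffices to
   range over b'_1..b'_t. *)
Definition dec_ok n Lam a (G : code n Lam a) (e : epat n) (b : inseq a)
  (tau t : nat) : bool :=
  [forall B : {ffun 'I_t -> 'cV['F_2]_a},
     consistent G e b B ==> (seqof B tau == b tau)].

Definition Yev n Lam a (G : code n Lam a) (b : inseq a) (tau' tau : nat)
  (e : epat n) : bool :=
  [forall l : 'I_tau', (0 < (l : nat)) ==> dec_ok G e b l tau]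
  && ~~ dec_ok G e b tau' tau.

(* Probability over i.i.d. erasures (prob. p) of the packets of blocks
   1..T, of an event ev on erasure patterns (ev is only applied to events
   depending on blocks <= T; packets after T are set to "received"). *)
Definition ext n T (E : {ffun 'I_T * 'I_n -> bool}) : epat n :=
  fun t j => match (insub t.-1 : option 'I_T) with
             | Some i => (0 < t)%N && E (i, j)
             | None => false
             end.

Definition pweight (p : R) n T (E : {ffun 'I_T * 'I_n -> bool}) : R :=
  \big[Rmult/R1]_(x : 'I_T * 'I_n) (if E x then p else Rminus R1 p).

Definition prob (p : R) n T (ev : epat n -> bool) : R :=
  \big[Rplus/R0]_(E : {ffun 'I_T * 'I_n -> bool})
     Rmult (pweight p E) (if ev (ext E) then R1 else R0).

(* (R, beta)-anytime reliability with d_o = 0, for every input sequence *)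
Definition anytime_reliable (p beta : R) n Lam a (G : code n Lam a) : Prop :=
  forall (b : inseq a) (tau t : nat), (1 <= tau)%N -> (tau <= t)%N ->
    Rle (prob p t (fun e => ~~ dec_ok G e b tau t))
        (Rpower (INR 2) (Ropp (Rmult beta (INR (t - tau + 1))))).

From mathcomp Require Import all_boot all_algebra.
From Stdlib Require Import Reals Lra.
From mathcomp Require Import zify Rstruct.

Set Implicit Arguments.
Unset Strict Implicit.
Unset Printing Implicit Defensive.
Import GRing.Theory.

(* The event Y(τ1',τ1) ∩ Y(τ2',τ2) implies two decoding errors that depend on
   the erasures of disjoint sets of channel blocks:
   - b_τ1' is not recovered at time τ1; this involves blocks 1..τ1 only;
   - at time τ2 the inputs b_1..b_(τ2'-1) are recovered but b_τ2' is not.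
     Subtracting the true input from a consistent input that differs at τ2'
     gives, by linearity and time invariance of the code, an input that is
     consistent with the all-zero input on the channel delayed by τ2'-1
     blocks and nonzero at time 1.  So the zero input is not recovered at
     position 1 at time τ2-τ2'+1, an event involving blocks τ2'..τ2 only.
   Erasures are i.i.d., so events on disjoint blocks are independent and the
   probability of the conjunction is at most the product of the two error
   probabilities; anytime reliability bounds each factor. *)

Definition restrict (X Y : finType) (h : Y -> X) (E : {ffun X -> bool})
  : {ffun Y -> bool} := [ffun y => E (h y)].

Section ProductMeasure.
Variable w : bool -> R.
Hypothesis w_sum : Rplus (w true) (w false) = R1.

Definition weight (X : finType) (E : {ffun X -> bool}) : R :=
  \big[Rmult/R1]_x w (E x).

(* The image of the product weight under restriction along an injection is
   the product weight: coordinates outside the image sum out to 1. *)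
Lemma weight_marginal (X Y : finType) (h : Y -> X) (E' : {ffun Y -> bool}) :
  injective h ->
  \big[Rplus/R0]_(E : {ffun X -> bool} | restrict h E == E') weight E
  = weight E'.
Proof.
move=> inj_h.
pose Q x (j : bool) := [forall y, (h y == x) ==> (j == E' y)].
have Q_image y j : Q (h y) j = (j == E' y).
  apply/forallP/eqP => [/(_ y)|-> y']; first by rewrite eqxx => /eqP.
  by apply/implyP => /eqP /inj_h ->.
have Q_out x j : x \notin h @: setT -> Q x j.
  move=> hx; apply/forallP => y; apply/implyP => /eqP hy.
  by rewrite -hy imset_f ?inE in hx.
rewrite (eq_bigl (mem (finfun.family Q))); last first.
  move=> E; apply/eqP/familyP => [eqE x|QE].
    by apply/forallP => y; apply/implyP => /eqP <-; rewrite -eqE ffunE.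
  apply/ffunP => y; rewrite ffunE; apply/eqP; rewrite -Q_image; exact: QE.
rewrite /weight -(bigA_distr_big_dep _ (fun _ j => w j)) (bigID (mem (h @: setT))) /=.
rewrite big_imset /=; last by move=> y y' _ _; exact: inj_h.
rewrite [X in Rmult _ X]big1 ?Rmult_1_r => [|x /Q_out Qx]; last first.
  by rewrite -w_sum -big_bool; apply: eq_bigl.
apply: eq_big => [y|y _]; first by rewrite inE.
by rewrite (eq_bigl _ _ (Q_image y)) big_pred1_eq.
Qed.

Section Disjoint.
Variables (X Y1 Y2 : finType) (h1 : Y1 -> X) (h2 : Y2 -> X).
Hypotheses (inj_h1 : injective h1) (inj_h2 : injective h2)
  (disj_h : forall y1 y2, h1 y1 != h2 y2).

Definition join_map (u : Y1 + Y2) : X :=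
  match u with inl y => h1 y | inr y => h2 y end.

Lemma join_map_inj : injective join_map.
Proof.
move=> [y|y] [y'|y'] /= eq_h.
- by rewrite (inj_h1 eq_h).
- by move: (disj_h y y'); rewrite eq_h eqxx.
- by move: (disj_h y' y); rewrite eq_h eqxx.
- by rewrite (inj_h2 eq_h).
Qed.

Lemma weight_joint_marginal (E1 : {ffun Y1 -> bool}) (E2 : {ffun Y2 -> bool}) :
  \big[Rplus/R0]_(E : {ffun X -> bool} |
                  (restrict h1 E == E1) && (restrict h2 E == E2)) weight E
  = Rmult (weight E1) (weight E2).
Proof.
pose E12 : {ffun Y1 + Y2 -> bool} :=
  [ffun u => match u with inl y => E1 y | inr y => E2 y end].
rewrite (eq_bigl (fun E => restrict join_map E == E12)); last first.
  move=> E; apply/andP/eqP => [[/eqP eqE1 /eqP eqE2]|eqE].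
    by apply/ffunP => -[y|y]; rewrite !ffunE -?eqE1 -?eqE2 ffunE.
  split; apply/eqP/ffunP => y; rewrite ffunE.
    by have := congr1 (fun f : {ffun Y1 + Y2 -> bool} => f (inl y)) eqE; rewrite !ffunE.
  by have := congr1 (fun f : {ffun Y1 + Y2 -> bool} => f (inr y)) eqE; rewrite !ffunE.
rewrite weight_marginal; last exact: join_map_inj.
by rewrite /weight big_sumType; congr Rmult; apply: eq_bigr => y _; rewrite ffunE.
Qed.

Lemma weight_independent (F1 : {ffun Y1 -> bool} -> R) (F2 : {ffun Y2 -> bool} -> R) :
  \big[Rplus/R0]_(E : {ffun X -> bool})
     Rmult (weight E) (Rmult (F1 (restrict h1 E)) (F2 (restrict h2 E)))
  = Rmult (\big[Rplus/R0]_E1 Rmult (weight E1) (F1 E1))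
          (\big[Rplus/R0]_E2 Rmult (weight E2) (F2 E2)).
Proof.
rewrite big_distrlr /= pair_big /=.
rewrite (partition_big (fun E => (restrict h1 E, restrict h2 E)) xpredT) //=.
apply: eq_bigr => -[E1 E2] _ /=.
rewrite (eq_bigr (fun E => Rmult (weight E) (Rmult (F1 E1) (F2 E2)))); last first.
  by move=> E /eqP [-> ->].
rewrite -big_distrl /= (eq_bigl _ _ (fun E => xpair_eqE _ _ _ _)) weight_joint_marginal.
by ring.
Qed.
End Disjoint.
End ProductMeasure.

Lemma ext_succ n T (E : {ffun 'I_T * 'I_n -> bool}) s (hs : s < T) j :
  ext E s.+1 j = E (Ordinal hs, j).
Proof.
rewrite /ext /=; case: insubP => [i _ val_i | ]; last by rewrite hs.
by congr (E (_, j)); apply: val_inj; rewrite /= val_i.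
Qed.

Lemma seqof_val a t (B : {ffun 'I_t -> 'cV['F_2]_a}) u (hu : 0 < u)
  (ht : u.-1 < t) : seqof B u = B (Ordinal ht).
Proof.
rewrite /seqof hu; case: insubP => [i _ val_i | ]; last by rewrite ht.
by congr (B _); apply: val_inj; rewrite /= val_i.
Qed.

Definition embed_prefix n (t T : nat) (le_tT : t <= T)
  (x : 'I_t * 'I_n) : 'I_T * 'I_n := (widen_ord le_tT x.1, x.2).

Lemma shift_ord_proof (T d : nat) (i : 'I_(T - d)) : i + d < T.
Proof. have := ltn_ord i; lia. Qed.

Definition embed_suffix n (T d : nat) (x : 'I_(T - d) * 'I_n) : 'I_T * 'I_n :=
  (Ordinal (shift_ord_proof x.1), x.2).

Lemma embed_prefix_inj n t T (le_tT : t <= T) :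
  injective (@embed_prefix n t T le_tT).
Proof. by move=> [i j] [i' j'] [/val_inj-> ->]. Qed.

Lemma embed_suffix_inj n T d : injective (@embed_suffix n T d).
Proof. by move=> [i j] [i' j'] [/addIn/val_inj-> ->]. Qed.

Lemma embed_disjoint n t T d (le_tT : t <= T) (le_td : t <= d) x y :
  @embed_prefix n t T le_tT x != @embed_suffix n T d y.
Proof.
case: x y => [i j] [i' j']; apply/negP => /eqP [/= eq_i _].
by have := ltn_ord i; lia.
Qed.

Lemma ext_prefix n t T (le_tT : t <= T) (E : {ffun 'I_T * 'I_n -> bool})
  (s : 'I_t) j :
  ext (restrict (embed_prefix le_tT) E) s.+1 j = ext E s.+1 j.
Proof.
rewrite (ext_succ _ (ltn_ord s)) (ext_succ _ (leq_trans (ltn_ord s) le_tT)).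
by rewrite ffunE; congr (E (_, j)); apply: val_inj.
Qed.

Lemma ext_suffix n T d (E : {ffun 'I_T * 'I_n -> bool}) (s : 'I_(T - d)) j :
  ext (restrict (@embed_suffix n T d) E) s.+1 j = ext E (s + d).+1 j.
Proof.
rewrite (ext_succ _ (ltn_ord s)) (ext_succ _ (shift_ord_proof s)).
by rewrite ffunE; congr (E (_, j)); apply: val_inj.
Qed.

Section ChannelLinearity.
Variables (n Lam a : nat) (G : code n Lam a).
Local Open Scope ring_scope.

Definition zero_input : inseq a := fun _ => 0.

Lemma chan_zero t j : chan G zero_input t j = 0.
Proof. by rewrite /chan big1 // => s _; rewrite mulmx0. Qed.

Lemma chan_shift (d t : nat) (j : 'I_n) (x y D : inseq a) :
  (forall l : nat, (0 < l <= d)%nat -> x l = y l) ->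
  (forall u : nat, (0 < u <= t)%nat -> D u = (x (u + d) - y (u + d))) ->
  chan G D t j = (chan G x (t + d) j - chan G y (t + d) j).
Proof.
move=> eq_xy eq_D; rewrite /chan -sumrB; symmetry.
rewrite (eq_bigr (fun v => G (t + d - v).+1 j *m (x v - y v))); last first.
  by move=> v _; rewrite mulmxBr.
rewrite (@big_cat_nat _ _ _ d.+1) //=; last by lia.
rewrite big_nat_cond big1 ?add0r; last first.
  by move=> v /andP[/andP[v_gt0 v_le] _]; rewrite eq_xy ?subrr ?mulmx0 //; lia.
rewrite -(add1n d) big_addn.
have -> : ((t + d).+1 - d = t.+1)%nat by lia.
apply: eq_big_nat => u /andP[u_gt0 u_le]; rewrite eq_D; last by lia.
by have -> : (t + d - (u + d) = t - u)%nat by lia.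
Qed.

Lemma zero_input_error (e e' : epat n) (b : inseq a) (d t : nat)
  (B : {ffun 'I_t -> 'cV['F_2]_a}) :
  (d < t)%nat ->
  (forall (s : 'I_(t - d)) j, e' s.+1 j = e (s + d).+1 j) ->
  consistent G e b B ->
  (forall l : nat, (0 < l <= d)%nat -> seqof B l = b l) ->
  seqof B d.+1 != b d.+1 ->
  ~~ dec_ok G e' zero_input 1 (t - d).
Proof.
move=> lt_dt eq_e consB agree differ.
pose D : {ffun 'I_(t - d) -> 'cV['F_2]_a} :=
  [ffun i : 'I_(t - d) => seqof B (i + d.+1)%nat - b (i + d.+1)%nat].
apply/forallPn; exists D; rewrite negb_imply; apply/andP; split.
  apply/forallP => s; apply/forallP => j; apply/implyP => received.
  rewrite chan_zero (@chan_shift d _ _ (seqof B) b _ agree); last first.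
    move=> u /andP[u_gt0 u_le].
    have lt_u : (u.-1 < t - d)%nat by have := ltn_ord s; lia.
    rewrite (seqof_val _ u_gt0 lt_u) ffunE /=.
    by have -> : (u.-1 + d.+1 = u + d)%nat by lia.
  have lt_s : (s + d < t)%nat by exact: shift_ord_proof.
  move/forallP: consB => /(_ (Ordinal lt_s)) /forallP /(_ j) /implyP.
  by rewrite addSn subr_eq0; apply; rewrite -eq_e.
have lt_0 : (0 < t - d)%nat by lia.
by rewrite (seqof_val _ (isT : (0 < 1)%nat) lt_0) ffunE /= add0n subr_eq0.
Qed.

End ChannelLinearity.

Section ErrorEvents.
Variables (n Lam a : nat) (G : code n Lam a).

Lemma dec_ok_local (e e' : epat n) (b : inseq a) tau t :
  (forall (s : 'I_t) j, e s.+1 j = e' s.+1 j) ->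
  dec_ok G e b tau t = dec_ok G e' b tau t.
Proof.
move=> eq_e; apply: eq_forallb => B; congr (_ ==> _).
by apply: eq_forallb => s; apply: eq_forallb => j; rewrite eq_e.
Qed.

Lemma Yev_agree_before (b : inseq a) (tau' tau : nat) (e : epat n)
  (B : {ffun 'I_tau -> 'cV['F_2]_a}) :
  Yev G b tau' tau e -> consistent G e b B ->
  forall l : nat, 0 < l < tau' -> seqof B l = b l.
Proof.
move=> /andP[/forallP before _] consB l /andP[l_gt0 lt_l].
move: (before (Ordinal lt_l)) => /=; rewrite l_gt0 /= => /forallP /(_ B).
by rewrite consB => /eqP.
Qed.

Lemma Yev_prefix_error (b : inseq a) (tau' tau T : nat) (le_tau : tau <= T)
  (E : {ffun 'I_T * 'I_n -> bool}) :
  Yev G b tau' tau (ext E) ->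
  ~~ dec_ok G (ext (restrict (embed_prefix le_tau) E)) b tau' tau.
Proof.
move=> /andP[_ err].
by rewrite -(dec_ok_local (e := ext E)) // => s j; rewrite ext_prefix.
Qed.

Lemma Yev_suffix_error (b : inseq a) (tau' tau : nat)
  (E : {ffun 'I_tau * 'I_n -> bool}) :
  0 < tau' <= tau -> Yev G b tau' tau (ext E) ->
  ~~ dec_ok G (ext (restrict (@embed_suffix n tau tau'.-1) E))
            (zero_input a) 1 (tau - tau'.-1).
Proof.
move=> /andP[tau'_gt0 le_tau] Y.
have /andP[_ /forallPn [B]] := Y; rewrite negb_imply => /andP[consB differ].
apply: (zero_input_error (e := ext E) _ _ consB); first by lia.
- by move=> s j; rewrite ext_suffix.
- by move=> l /andP[l_gt0 l_le]; apply: (Yev_agree_before Y consB); lia.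
- by rewrite prednK.
Qed.
End ErrorEvents.

Definition erasure_weight (p : R) (v : bool) : R := if v then p else Rminus R1 p.

Lemma pweight_ge0 (p : R) n T (E : {ffun 'I_T * 'I_n -> bool}) :
  Rle R0 p -> Rle p R1 -> Rle R0 (pweight p E).
Proof.
move=> hp0 hp1; apply: (big_ind (Rle R0)) => [|x y|x _]; first lra.
  exact: Rmult_le_pos.
by case: (E x); lra.
Qed.

Lemma prob_ge0 (p : R) n T (ev : epat n -> bool) :
  Rle R0 p -> Rle p R1 -> Rle R0 (prob p T ev).
Proof.
move=> hp0 hp1; apply: (big_ind (Rle R0)) => [|x y|E _]; try lra.
by apply: Rmult_le_pos; [exact: pweight_ge0|case: (ev _); lra].
Qed.

Lemma prob_le_independent (p : R) n T T1 T2
  (h1 : 'I_T1 * 'I_n -> 'I_T * 'I_n) (h2 : 'I_T2 * 'I_n -> 'I_T * 'I_n)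
  (ev ev1 ev2 : epat n -> bool) :
  Rle R0 p -> Rle p R1 -> injective h1 -> injective h2 ->
  (forall x y, h1 x != h2 y) ->
  (forall E, ev (ext E) -> ev1 (ext (restrict h1 E)) && ev2 (ext (restrict h2 E))) ->
  Rle (prob p T ev) (Rmult (prob p T1 ev1) (prob p T2 ev2)).
Proof.
move=> hp0 hp1 inj1 inj2 disj implied.
have w_sum : Rplus (erasure_weight p true) (erasure_weight p false) = R1.
  by rewrite /erasure_weight; lra.
pose ind (P : bool) : R := if P then R1 else R0.
rewrite /prob -(weight_independent w_sum inj1 inj2 disj
                  (fun E1 => ind (ev1 (ext E1))) (fun E2 => ind (ev2 (ext E2)))).
apply: (big_ind2 Rle) => [|x1 x2 y1 y2|E _]; first lra.
  exact: Rplus_le_compat.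
apply: Rmult_le_compat_l; first exact: pweight_ge0.
rewrite /ind; case: (boolP (ev (ext E))) => [/implied /andP[-> ->]|_]; first lra.
by case: (ev1 _); case: (ev2 _); lra.
Qed.

Theorem lemma6 (p beta : R) (n Lam a : nat) (G : code n Lam a)
  (hp0 : Rle R0 p) (hp1 : Rle p R1)
  (hrel : anytime_reliable p beta G)
  (b : inseq a) (tau1' tau1 tau2' tau2 : nat)
  (h1 : (1 <= tau1')%N) (h2 : (tau1' <= tau1)%N) (h3 : (tau1 < tau2')%N)
  (h4 : (tau2' <= tau2)%N) :
  Rle (prob p tau2 (fun e => Yev G b tau1' tau1 e && Yev G b tau2' tau2 e))
      (Rpower (INR 2)
         (Ropp (Rmult beta (INR ((tau1 - tau1' + 1) + (tau2 - tau2' + 1)))))).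
Proof.
have le12 : tau1 <= tau2 by lia.
have le_prefix : tau1 <= tau2'.-1 by lia.
have suffix_range : 0 < tau2' <= tau2 by lia.
set T2 := tau2 - tau2'.-1.
have joint : Rle (prob p tau2 (fun e => Yev G b tau1' tau1 e && Yev G b tau2' tau2 e))
    (Rmult (prob p tau1 (fun e => ~~ dec_ok G e b tau1' tau1))
           (prob p T2 (fun e => ~~ dec_ok G e (zero_input a) 1 T2))).
  apply: (prob_le_independent hp0 hp1 (embed_prefix_inj (le_tT := le12))
    (@embed_suffix_inj n tau2 tau2'.-1) (embed_disjoint le12 le_prefix)).
  move=> E /andP[Y1 Y2].
  by rewrite (Yev_prefix_error le12 Y1) (Yev_suffix_error suffix_range Y2).
apply: (Rle_trans _ _ _ joint).
rewrite plus_INR Rmult_plus_distr_l Ropp_plus_distr Rpower_plus.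
apply: Rmult_le_compat; try exact: prob_ge0.
  exact: hrel.
have -> : tau2 - tau2' + 1 = tau2 - tau2'.-1 - 1 + 1 by lia.
apply: hrel => //; lia.
Qed.
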